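(* Let $G$ be a group acting by graph automorphisms on connected graphs $\Gamma_1$ and $\Gamma_2$, each with finitely many orbits of edges. Suppose there is a bijection $\beta: V(\Gamma_1)\to V(\Gamma_2)$ between the vertex sets such that $\beta(gv)=g\beta(v)$ for all $g\in G$ and $v\in V(\Gamma_1)$. Then $\Gamma_1$ and $\Gamma_2$ (with combinatorial metrics) are quasi-isometric.
   Context: Graphs are equipped with the combinatorial metric (each edge has length 1); they need not be locally finite. Metric spaces $M_1,M_2$ are quasi-isometric if there are $\lambda>0$, $c\ge0$, $\varepsilon\ge0$ and a map $\alpha:M_1\to M_2$ with $\frac1\lambda d(x,y)-c\le d(\alpha(x),\alpha(y))\le \lambda d(x,y)+c$ for all $x,y\in M_1$, and every point of $M_2$ within distance $\varepsilon$ of $\alpha(M_1)$. *)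

From Stdlib Require Import Reals List.
Open Scope R_scope.

Definition is_group (G : Type) (mul : G -> G -> G) (one : G) (inv : G -> G) : Prop :=
  (forall a b c, mul a (mul b c) = mul (mul a b) c) /\
  (forall a, mul one a = a) /\ (forall a, mul a one = a) /\
  (forall a, mul (inv a) a = one) /\ (forall a, mul a (inv a) = one).

Definition is_graph (V : Type) (adj : V -> V -> Prop) : Prop :=
  (forall u v, adj u v -> adj v u) /\ (forall v, ~ adj v v).

Inductive walk {V : Type} (adj : V -> V -> Prop) : nat -> V -> V -> Prop :=
| walk0 : forall x, walk adj 0 x x
| walkS : forall n x y z, adj x y -> walk adj n y z -> walk adj (S n) x z.

Definition connected_graph {V : Type} (adj : V -> V -> Prop) : Prop :=
  forall x y, exists n, walk adj n x y.

Definition gdist {V : Type} (adj : V -> V -> Prop) (x y : V) (n : nat) : Prop :=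
  walk adj n x y /\ (forall m, walk adj m x y -> (n <= m)%nat).

Definition acts_by_automorphisms (G V : Type) (mul : G -> G -> G) (one : G)
  (adj : V -> V -> Prop) (act : G -> V -> V) : Prop :=
  (forall v, act one v = v) /\
  (forall g h v, act (mul g h) v = act g (act h v)) /\
  (forall g u v, adj u v <-> adj (act g u) (act g v)).

Definition finitely_many_edge_orbits (G V : Type) (adj : V -> V -> Prop)
  (act : G -> V -> V) : Prop :=
  exists l : list (V * V),
    forall u v, adj u v -> exists e, In e l /\ exists g,
      (act g (fst e) = u /\ act g (snd e) = v) \/
      (act g (fst e) = v /\ act g (snd e) = u).

Definition graphs_quasi_isometric {V1 V2 : Type}
  (adj1 : V1 -> V1 -> Prop) (adj2 : V2 -> V2 -> Prop) : Prop :=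
  exists (lam c eps : R) (alpha : V1 -> V2),
    lam > 0 /\ c >= 0 /\ eps >= 0 /\
    (forall x y n m, gdist adj1 x y n -> gdist adj2 (alpha x) (alpha y) m ->
       / lam * INR n - c <= INR m /\ INR m <= lam * INR n + c) /\
    (forall z, exists x n, gdist adj2 z (alpha x) n /\ INR n <= eps).

From Stdlib Require Import Reals List Lia Lra.

(* An equivariant map out of a graph with finitely many edge orbits stretches
   every edge by at most a uniform constant K: fix walks joining the images of
   the finitely many representative edges and translate them by the group.
   Hence it stretches walks of length n to walks of length at most K n.
   Applying this to beta and to its (again equivariant) inverse shows that
   beta is a bi-Lipschitz bijection, in particular a quasi-isometry. *)

Section Walks.

Context {V : Type} (adj : V -> V -> Prop).

Lemma walk_cat n m x y z :
  walk adj n x y -> walk adj m y z -> walk adj (n + m) x z.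
Proof.
  induction 1 as [|n x y' y Hxy _ IH]; intros Hyz; simpl; auto.
  apply walkS with y'; auto.
Qed.

Lemma walk_rev n x y :
  (forall u v, adj u v -> adj v u) -> walk adj n x y -> walk adj n y x.
Proof.
  intros Hsym; induction 1 as [|n x y' y Hxy _ IH]; [constructor|].
  replace (S n) with (n + 1)%nat by lia.
  apply walk_cat with y'; auto.
  apply walkS with x; [auto | constructor].
Qed.

End Walks.

Section WalkMaps.

Context {V W : Type} (adjV : V -> V -> Prop) (adjW : W -> W -> Prop).

Lemma walk_map (h : V -> W) n x y :
  (forall u v, adjV u v -> adjW (h u) (h v)) ->
  walk adjV n x y -> walk adjW n (h x) (h y).
Proof.
  intros Hh; induction 1; [constructor | eapply walkS; eauto].
Qed.

Definition edge_lipschitz (f : V -> W) (K : nat) : Prop :=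
  forall u v, adjV u v -> exists k, (k <= K)%nat /\ walk adjW k (f u) (f v).

Lemma walk_lipschitz (f : V -> W) K n x y :
  edge_lipschitz f K -> walk adjV n x y ->
  exists k, (k <= K * n)%nat /\ walk adjW k (f x) (f y).
Proof.
  intros HK; induction 1 as [x|n x y' y Hxy _ IH].
  - exists 0%nat; split; [lia | constructor].
  - destruct IH as [k [Hk Hw]]; destruct (HK _ _ Hxy) as [k' [Hk' Hw']].
    exists (k' + k)%nat; split; [nia |].
    apply (walk_cat adjW) with (f y'); auto.
Qed.

Lemma gdist_lipschitz (f : V -> W) K x y n m :
  edge_lipschitz f K -> gdist adjV x y n -> gdist adjW (f x) (f y) m ->
  (m <= K * n)%nat.
Proof.
  intros HK [Hn _] [_ Hmin].
  destruct (walk_lipschitz f K n x y HK Hn) as [k [Hk Hw]].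
  specialize (Hmin k Hw); lia.
Qed.

End WalkMaps.

Lemma connected_walk_lengths_bounded (W : Type) (adj : W -> W -> Prop)
  (l : list (W * W)) :
  connected_graph adj ->
  exists K, forall e, In e l -> exists k, (k <= K)%nat /\ walk adj k (fst e) (snd e).
Proof.
  intros Hc; induction l as [|e l [K HK]].
  - exists 0%nat; intros e [].
  - destruct (Hc (fst e) (snd e)) as [n Hn].
    exists (n + K)%nat; intros e' [<- | He'].
    + exists n; split; [lia | auto].
    + destruct (HK e' He') as [k [Hk Hw]]; exists k; split; [lia | auto].
Qed.

Lemma equivariant_edge_lipschitz (G V W : Type) (adjV : V -> V -> Prop)
  (adjW : W -> W -> Prop) (actV : G -> V -> V) (actW : G -> W -> W) (f : V -> W) :
  (forall u v, adjW u v -> adjW v u) -> connected_graph adjW ->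
  (forall g u v, adjW u v -> adjW (actW g u) (actW g v)) ->
  finitely_many_edge_orbits G V adjV actV ->
  (forall g v, f (actV g v) = actW g (f v)) ->
  exists K, edge_lipschitz adjV adjW f K.
Proof.
  intros Hsym Hc Hact [l Hl] Hf.
  destruct (connected_walk_lengths_bounded W adjW
              (map (fun e => (f (fst e), f (snd e))) l) Hc) as [K HK].
  exists K; intros u v Huv.
  destruct (Hl u v Huv) as [e [He [g Hg]]].
  destruct (HK _ (in_map _ _ _ He)) as [k [Hk Hw]]; simpl in Hw.
  exists k; split; [exact Hk |].
  apply (walk_map adjW adjW (actW g)) in Hw; [| apply Hact].
  destruct Hg as [[<- <-] | [<- <-]]; rewrite !Hf;
    [exact Hw | exact (walk_rev adjW _ _ _ Hsym Hw)].
Qed.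

Lemma equivariant_inverse (G V W : Type) (actV : G -> V -> V) (actW : G -> W -> W)
  (f : V -> W) (f' : W -> V) :
  (forall v, f' (f v) = v) -> (forall w, f (f' w) = w) ->
  (forall g v, f (actV g v) = actW g (f v)) ->
  forall g w, f' (actW g w) = actV g (f' w).
Proof.
  intros Hf'f Hff' Hf g w.
  rewrite <- (Hff' w) at 1; rewrite <- Hf; apply Hf'f.
Qed.

Lemma lipschitz_bijection_quasi_isometric (V W : Type) (adjV : V -> V -> Prop)
  (adjW : W -> W -> Prop) (f : V -> W) (f' : W -> V) K K' :
  (forall v, f' (f v) = v) -> (forall w, f (f' w) = w) ->
  edge_lipschitz adjV adjW f K -> edge_lipschitz adjW adjV f' K' ->
  graphs_quasi_isometric adjV adjW.
Proof.
  intros Hf'f Hff' HK HK'.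
  set (L := (K + K' + 1)%nat).
  assert (HL : 0 < INR L) by (apply lt_0_INR; unfold L; lia).
  exists (INR L), 0, 0, f.
  split; [lra |]; split; [lra |]; split; [lra |]; split.
  - intros x y n m Hn Hm.
    assert (Hmn : (m <= L * n)%nat)
      by (pose proof (gdist_lipschitz adjV adjW f K x y n m HK Hn Hm);
          unfold L; nia).
    rewrite <- (Hf'f x), <- (Hf'f y) in Hn.
    assert (Hnm : (n <= L * m)%nat)
      by (pose proof (gdist_lipschitz adjW adjV f' K' _ _ m n HK' Hm Hn);
          unfold L; nia).
    apply le_INR in Hmn, Hnm; rewrite mult_INR in Hmn, Hnm.
    split; [| lra].
    apply Rmult_le_reg_l with (INR L); [exact HL |].
    rewrite Rmult_minus_distr_l, <- Rmult_assoc, Rinv_r by lra; lra.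
  - intros z; exists (f' z), 0%nat; rewrite Hff'.
    split; [split; [constructor | intros; lia] | simpl; lra].
Qed.

Theorem lemma3p1 (G : Type) (mul : G -> G -> G) (one : G) (inv : G -> G)
  (V1 V2 : Type) (adj1 : V1 -> V1 -> Prop) (adj2 : V2 -> V2 -> Prop)
  (act1 : G -> V1 -> V1) (act2 : G -> V2 -> V2) (beta : V1 -> V2) :
  is_group G mul one inv ->
  is_graph V1 adj1 -> is_graph V2 adj2 ->
  connected_graph adj1 -> connected_graph adj2 ->
  acts_by_automorphisms G V1 mul one adj1 act1 ->
  acts_by_automorphisms G V2 mul one adj2 act2 ->
  finitely_many_edge_orbits G V1 adj1 act1 ->
  finitely_many_edge_orbits G V2 adj2 act2 ->
  (exists beta_inv : V2 -> V1,
     (forall v, beta_inv (beta v) = v) /\ (forall w, beta (beta_inv w) = w)) ->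
  (forall g v, beta (act1 g v) = act2 g (beta v)) ->
  graphs_quasi_isometric adj1 adj2.
Proof.
  intros _ [Hsym1 _] [Hsym2 _] Hc1 Hc2 [_ [_ Haut1]] [_ [_ Haut2]] Hfin1 Hfin2
         [beta' [Hbeta'beta Hbetabeta']] Hbeta.
  pose proof (equivariant_inverse G V1 V2 act1 act2 beta beta'
                Hbeta'beta Hbetabeta' Hbeta) as Hbeta'.
  destruct (equivariant_edge_lipschitz G V1 V2 adj1 adj2 act1 act2 beta Hsym2 Hc2
              (fun g u v => proj1 (Haut2 g u v)) Hfin1 Hbeta) as [K HK].
  destruct (equivariant_edge_lipschitz G V2 V1 adj2 adj1 act2 act1 beta' Hsym1 Hc1
              (fun g u v => proj1 (Haut1 g u v)) Hfin2 Hbeta') as [K' HK'].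
  exact (lipschitz_bijection_quasi_isometric V1 V2 adj1 adj2 beta beta' K K'
           Hbeta'beta Hbetabeta' HK HK').
Qed.
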